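(* Consider the binary CA-RRM with affine indices $s_f(A)=\alpha_f+\beta_f^\top\psi(A)$, $f\in\mathcal F$, normalized by $(\alpha_{f_0},\beta_{f_0})=(0,0)$ for a baseline rule $f_0\in\mathcal F$, and with $p(A)\in(0,1)$ for all menus in the support. Let $d=\dim\psi$. Suppose there exist $d+1$ feature values $x^{(0)},\dots,x^{(d)}\in\mathbb R^d$ such that: (G1) for each $k\in\{0,\dots,d\}$ there exist menus $A_{k1},\dots,A_{kM_k}$ with $\psi(A_{km})=x^{(k)}$ for all $m$, such that the $M_k\times|\mathcal F|$ matrix $H^{(k)}$ with rows $h(A_{k1})^\top,\dots,h(A_{kM_k})^\top$ has rank $|\mathcal F|-1$; (G2) the $(d+1)\times(d+1)$ matrix $X$ whose $k$-th row is $(1,(x^{(k)})^\top)$ has full rank $d+1$. Then the parameter vector $\{(\alpha_f,\beta_f)\}_{f\in\mathcal F}$ is globally identified from the population objects $\{p(A),\kappa^L(A),\kappa^R(A),\psi(A)\}$: any two normalized parameter vectors that generate, via the model, the same choice probabilities $p(A_{km})$ at all menus $A_{km}$ coincide.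
   Context: Binary choice setting. $\mathcal F$ is a finite set of rules, menus $A=\{L^1,L^2\}$. Each rule $f$ has deterministic decisive-side indicators $\kappa_f^L(A),\kappa_f^R(A)\in\{0,1\}$ (not both 1), indicating that $f$ is decisive and recommends the left, respectively right, option at $A$; $\mathcal I_L(A)=\{f:\kappa_f^L(A)=1\}$, $\mathcal I_R(A)=\{f:\kappa_f^R(A)=1\}$. $\psi$ maps menus to $\mathbb R^d$. The model specifies the probability of choosing $L^1$ as $$p(A)=\frac{\sum_{f}\kappa_f^L(A)\,\omega_f(\psi(A))}{\sum_{f}(\kappa_f^L(A)+\kappa_f^R(A))\,\omega_f(\psi(A))},\qquad \omega_f(x):=\exp(\alpha_f+\beta_f^\top x),$$ for menus where both $\mathcal I_L(A),\mathcal I_R(A)$ are nonempty. For such menus, $r(A):=p(A)/(1-p(A))$ and $h(A)\in\mathbb R^{|\mathcal F|}$ has entries $h_f(A)=\kappa_f^L(A)-r(A)\kappa_f^R(A)$. The menus $A_{km}$ in (G1) are assumed two-sided. *)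

From mathcomp Require Import all_boot all_order all_algebra.
From mathcomp Require Import all_classical all_reals all_analysis.
Set Implicit Arguments. Unset Strict Implicit. Unset Printing Implicit Defensive.
Import Order.TTheory GRing.Theory Num.Theory.
Local Open Scope ring_scope.

Section CARRM.
Variables (R : realType) (F : finType) (Menu : Type) (d : nat).

Definition dotv (b x : 'rV[R]_d) : R := \sum_(i < d) b 0 i * x 0 i.

Definition omega (alpha : F -> R) (beta : F -> 'rV[R]_d) (f : F) (x : 'rV[R]_d) : R :=
  expR (alpha f + dotv (beta f) x).

Definition model_p (kL kR : F -> Menu -> bool) (psi : Menu -> 'rV[R]_d)
  (alpha : F -> R) (beta : F -> 'rV[R]_d) (A : Menu) : R :=
  (\sum_(f : F) (kL f A)%:R * omega alpha beta f (psi A)) /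
  (\sum_(f : F) ((kL f A)%:R + (kR f A)%:R) * omega alpha beta f (psi A)).

Definition two_sided (kL kR : F -> Menu -> bool) (A : Menu) : Prop :=
  (exists f, kL f A) /\ (exists f, kR f A).

Definition odds (p : Menu -> R) (A : Menu) : R := p A / (1 - p A).

Definition hvec (kL kR : F -> Menu -> bool) (p : Menu -> R) (A : Menu) (f : F) : R :=
  (kL f A)%:R - odds p A * (kR f A)%:R.

Definition Hmat (kL kR : F -> Menu -> bool) (p : Menu -> R) (M : nat)
  (Am : 'I_M -> Menu) : 'M[R]_(M, #|F|) :=
  \matrix_(m < M, j < #|F|) hvec kL kR p (Am m) (enum_val j).

Definition Xmat (x : 'I_d.+1 -> 'rV[R]_d) : 'M[R]_(d.+1, 1 + d) :=
  \matrix_(k < d.+1) row_mx (1 : 'rV[R]_1) (x k).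

End CARRM.

From mathcomp Require Import all_boot all_order all_algebra.
From mathcomp Require Import all_classical all_reals all_analysis.
Import Order.TTheory GRing.Theory Num.Theory.
From mathcomp Require Import zify ring.
Set Implicit Arguments. Unset Strict Implicit. Unset Printing Implicit Defensive.
Local Open Scope ring_scope.

(* Clearing the denominator of the model probability shows that,
   at every menu, the weight vector (omega_f(x))_f is orthogonal to h(A).
   By (G1) the weight vectors at x^(k) lie on a line, and the baseline
   normalization fixes their f0-coordinate to 1, so they are pinned down;
   taking logarithms identifies the indices alpha_f + beta_f^T x^(k).
   These are the entries of (alpha_f, beta_f) X^T, and X is invertible by (G2). *)

Lemma corank1_kermx_eq (K : fieldType) (m n : nat) (H : 'M[K]_(m, n))
    (u v : 'rV_n) (j0 : 'I_n) :
  \rank H = (n - 1)%N -> u *m H^T = 0 -> v *m H^T = 0 ->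
  u 0 j0 = 1 -> v 0 j0 = 1 -> u = v.
Proof.
move=> rH uH vH u1 v1.
have n_gt0 : (0 < n)%N := leq_ltn_trans (leq0n _) (ltn_ord j0).
have rK : \rank (kermx H^T) = 1%N by rewrite mxrank_ker mxrank_tr rH; lia.
have v_neq0 : v != 0.
  by apply: contra_eq_neq v1 => ->; rewrite mxE eq_sym oner_neq0.
have vK : (v <= kermx H^T)%MS by apply/sub_kermxP.
have uK : (u <= kermx H^T)%MS by apply/sub_kermxP.
have Kv : (kermx H^T <= v)%MS.
  by have := (mxrank_leqif_eq vK).2; rewrite rank_rV v_neq0 rK eqxx => /esym/andP[].
have /submxP[D uD] := submx_trans uK Kv.
have uDv j : u 0 j = D 0 0 * v 0 j by rewrite uD mxE big_ord1.
have D1 : D 0 0 = 1 by move: (uDv j0); rewrite u1 v1 mulr1.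
by apply/rowP => j; rewrite uDv D1 mul1r.
Qed.

Lemma share_odds_balance (K : fieldType) (a b : K) :
  a + b != 0 -> a / (a + b) != 1 -> a - a / (a + b) / (1 - a / (a + b)) * b = 0.
Proof.
move=> ab_neq0 q_neq1; set q := a / (a + b).
have q1_neq0 : 1 - q != 0 by rewrite subr_eq0 eq_sym.
have aq : a = q * (a + b) by rewrite divfK.
have -> : a - q / (1 - q) * b = (a - q * (a + b)) / (1 - q) by field.
by rewrite -aq subrr mul0r.
Qed.

Section WeightVectors.
Variables (R : realType) (F : finType) (Menu : Type) (d : nat).
Variables (kL kR : F -> Menu -> bool) (psi : Menu -> 'rV[R]_d) (p : Menu -> R).

Lemma model_weights_orthogonal (alpha : F -> R) (beta : F -> 'rV[R]_d) (B : Menu) :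
  0 < p B < 1 -> model_p kL kR psi alpha beta B = p B ->
  \sum_f omega alpha beta f (psi B) * hvec kL kR p B f = 0.
Proof.
case/andP=> p_gt0 p_lt1; rewrite /model_p /hvec /odds.
set SL := \sum_f _; set SR := \sum_f (kR f B)%:R * omega alpha beta f (psi B).
have -> : \sum_f ((kL f B)%:R + (kR f B)%:R) * omega alpha beta f (psi B) = SL + SR.
  by rewrite -big_split; apply: eq_bigr => f _; rewrite mulrDl.
move=> pB; rewrite -pB in p_gt0 p_lt1 *.
have S_neq0 : SL + SR != 0.
  by apply/eqP => S0; move: p_gt0; rewrite S0 invr0 mulr0 ltxx.
rewrite -[RHS](share_odds_balance S_neq0 (negbT (lt_eqF p_lt1))) mulr_sumr -sumrB.
by apply: eq_bigr => f _; ring.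
Qed.

Definition weight_row (alpha : F -> R) (beta : F -> 'rV[R]_d) (x : 'rV[R]_d) :
  'rV[R]_#|F| := \row_j omega alpha beta (enum_val j) x.

Lemma weight_row_Hmat_tr (alpha : F -> R) (beta : F -> 'rV[R]_d) (x : 'rV[R]_d)
    (M : nat) (Am : 'I_M -> Menu) :
  (forall m, psi (Am m) = x) -> (forall m, 0 < p (Am m) < 1) ->
  (forall m, model_p kL kR psi alpha beta (Am m) = p (Am m)) ->
  weight_row alpha beta x *m (Hmat kL kR p Am)^T = 0.
Proof.
move=> psiA pA modelA; apply/rowP => m; rewrite !mxE.
under eq_bigr => j _ do rewrite !mxE.
rewrite -(big_enum_val (fun f => omega alpha beta f x * hvec kL kR p (Am m) f)).
by rewrite -(psiA m) model_weights_orthogonal.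
Qed.

Lemma weight_row_baseline (alpha : F -> R) (beta : F -> 'rV[R]_d) (f0 : F)
    (x : 'rV[R]_d) :
  alpha f0 = 0 -> beta f0 = 0 -> weight_row alpha beta x 0 (enum_rank f0) = 1.
Proof.
move=> a0 b0; rewrite mxE enum_rankK /omega /dotv a0 b0.
by rewrite big1 ?addr0 ?expR0 // => i _; rewrite mxE mul0r.
Qed.

End WeightVectors.

Lemma Xmat_affine_index (R : realType) (d : nat) (x : 'I_d.+1 -> 'rV[R]_d)
    (a : R) (b : 'rV[R]_d) (k : 'I_d.+1) :
  (row_mx a%:M b *m (Xmat x)^T) 0 k = a + dotv b (x k).
Proof.
rewrite mxE big_split_ord big_ord1 /= /dotv.
rewrite !mxE (unsplitK (inl ord0 : 'I_1 + 'I_d)) !mxE mulr1.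
congr (_ + _); apply: eq_bigr => i _.
by rewrite !mxE (unsplitK (inr i : 'I_1 + 'I_d)).
Qed.

Lemma affine_index_identified (R : realType) (d : nat) (x : 'I_d.+1 -> 'rV[R]_d)
    (a1 a2 : R) (b1 b2 : 'rV[R]_d) :
  \rank (Xmat x) = d.+1 ->
  (forall k, a1 + dotv b1 (x k) = a2 + dotv b2 (x k)) -> a1 = a2 /\ b1 = b2.
Proof.
move=> rX eq_index.
have freeXt : row_free (Xmat x)^T by rewrite /row_free mxrank_tr rX add1n.
have /eq_row_mx[/matrixP/(_ 0 0) + ->] : row_mx a1%:M b1 = row_mx a2%:M b2.
  by apply: (row_free_inj freeXt); apply/rowP => k; rewrite !Xmat_affine_index.
by rewrite !mxE.
Qed.

Theorem corollary1 (R : realType) (F : finType) (Menu : Type) (d : nat)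
  (f0 : F) (kL kR : F -> Menu -> bool) (psi : Menu -> 'rV[R]_d)
  (p : Menu -> R)
  (x : 'I_d.+1 -> 'rV[R]_d) (M : 'I_d.+1 -> nat)
  (A : forall k : 'I_d.+1, 'I_(M k) -> Menu)
  (alpha1 alpha2 : F -> R) (beta1 beta2 : F -> 'rV[R]_d) :
  (forall f B, ~~ (kL f B && kR f B)) ->
  (forall k m, two_sided kL kR (A k m)) ->
  (forall k m, psi (A k m) = x k) ->
  (forall k m, 0 < p (A k m) < 1) ->
  (forall k, \rank (Hmat kL kR p (A k)) = (#|F| - 1)%N) ->
  \rank (Xmat x) = d.+1 ->
  alpha1 f0 = 0 -> beta1 f0 = 0 ->
  alpha2 f0 = 0 -> beta2 f0 = 0 ->
  (forall k m, model_p kL kR psi alpha1 beta1 (A k m) = p (A k m)) ->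
  (forall k m, model_p kL kR psi alpha2 beta2 (A k m) = p (A k m)) ->
  forall f, alpha1 f = alpha2 f /\ beta1 f = beta2 f.
Proof.
move=> _ _ psiA pA rH rX a1 b1 a2 b2 model1 model2 f.
have eq_weights k : weight_row alpha1 beta1 (x k) = weight_row alpha2 beta2 (x k).
  apply: (corank1_kermx_eq (j0 := enum_rank f0) (rH k)).
  - exact: weight_row_Hmat_tr (psiA k) (pA k) (model1 k).
  - exact: weight_row_Hmat_tr (psiA k) (pA k) (model2 k).
  - exact: weight_row_baseline a1 b1.
  - exact: weight_row_baseline a2 b2.
apply: (affine_index_identified rX) => k; apply: expR_inj.
by have /rowP/(_ (enum_rank f)) := eq_weights k; rewrite !mxE enum_rankK.
Qed.
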